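(* Let $A\in M_n(\mathbb{Z})$ be invertible such that $x\mapsto A^{-1}x$ is a similarity with respect to Euclidean distance, and let $D\subset\mathbb{Z}^n$ be a subset of a complete residue system mod $A$. Let $\alpha\in T_{A,D-D}$ have a unique $(A,D-D)$-representation $(\alpha_j)_{j\ge1}$, and suppose there exist a positive integer $p$, finite sets $U_1,\dots,U_p,V_1,\dots,V_p\subset\mathbb{R}^n$ and $(\beta_j)_{j\ge1}\in D^{\mathbb{N}}$ with $(D\cap(D+\alpha_j))-\beta_j=U_j$ for $1\le j\le p$ and $(D\cap(D+\alpha_j))-\beta_j=U_\ell+V_\ell$ for $j>p$, $j\equiv\ell \pmod p$, $\ell\in\{1,\dots,p\}$. Consider the IFS consisting precisely of the (distinct) maps $$f(x)=A^{-p}\Big(x+\sum_{\ell=1}^p\big(A^{p-\ell}u_\ell+A^{-\ell}v_\ell\big)\Big),\qquad u_\ell\in U_\ell,\ v_\ell\in V_\ell\ (\ell=1,\dots,p).$$ If this IFS satisfies the open set condition, then it satisfies the strong separation condition.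
   Context: A similarity means a map $f$ with $\|f(x)-f(y)\|=c\|x-y\|$ for some $c\in(0,1)$ and all $x,y$. For finite $E\subset\mathbb{R}^n$, $\pi_{A,E}((e_j)_{j\ge1})=\sum_{j\ge1}A^{-j}e_j$, $T_{A,E}=\pi_{A,E}(E^{\mathbb{N}})$, and an $(A,E)$-representation of $x$ is a sequence $(e_j)\in E^{\mathbb{N}}$ with $\pi_{A,E}((e_j))=x$. $D+t=\{d+t:d\in D\}$, $U+V=\{u+v\}$ (Minkowski sum). A complete residue system mod $A$ is a set $\mathcal{D}\subset\mathbb{Z}^n$ mapping bijectively onto $\mathbb{Z}^n/A\mathbb{Z}^n$. An IFS $\{f_i\}_{i=1}^N$ with attractor $K$ satisfies the open set condition if there is a nonempty bounded open set $V$ with $\bigcup_i f_i(V)\subset V$ and the $f_i(V)$ pairwise disjoint; it satisfies the strong separation condition if the sets $f_i(K)$ are pairwise disjoint. *)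

From HB Require Import structures.
From mathcomp Require Import all_boot all_order all_algebra.
From mathcomp Require Import all_classical all_reals all_analysis.
Set Implicit Arguments. Unset Strict Implicit. Unset Printing Implicit Defensive.
Import Order.TTheory GRing.Theory Num.Theory.
Import numFieldNormedType.Exports.
Local Open Scope classical_set_scope.
Local Open Scope ring_scope.

Section Defs.
Variables (R : realType) (n : nat).

Definition toR (x : 'cV[int]_n) : 'cV[R]_n := map_mx (fun z : int => z%:~R) x.
Definition matR (A : 'M[int]_n) : 'M[R]_n := map_mx (fun z : int => z%:~R) A.

Definition enorm (x : 'cV[R]_n) : R := Num.sqrt (\sum_i (x i 0) ^+ 2).

Definition is_similarity (M : 'M[R]_n) : Prop :=
  exists c : R, 0 < c < 1 /\
    forall x y : 'cV[R]_n, enorm (M *m x - M *m y) = c * enorm (x - y).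

(* pi_{A,E}((e_j)_{j>=1}) = sum_{j>=1} A^{-j} e_j  (index 0 of e is ignored) *)
Definition piAE (A : 'M[int]_n) (e : nat -> 'cV[int]_n) : 'cV[R]_n :=
  limn (fun N => \sum_(1 <= j < N) ((invmx (matR A)) ^+ j *m toR (e j))).

Definition is_repr (A : 'M[int]_n) (E : set 'cV[int]_n)
    (e : nat -> 'cV[int]_n) (x : 'cV[R]_n) : Prop :=
  (forall j, (0 < j)%N -> E (e j)) /\ piAE A e = x.

Definition TAE (A : 'M[int]_n) (E : set 'cV[int]_n) : set 'cV[R]_n :=
  [set x | exists e, is_repr A E e x].

Definition congr_mod (A : 'M[int]_n) (x y : 'cV[int]_n) : Prop :=
  exists z : 'cV[int]_n, x - y = A *m z.

Definition complete_residue_system (A : 'M[int]_n) (Dc : set 'cV[int]_n) : Prop :=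
  (forall x y, Dc x -> Dc y -> congr_mod A x y -> x = y) /\
  (forall z, exists2 x, Dc x & congr_mod A z x).

Definition set_diff (D : set 'cV[int]_n) : set 'cV[int]_n :=
  [set x - y | x in D & y in D].

Definition set_translate (D : set 'cV[int]_n) (t : 'cV[int]_n) : set 'cV[int]_n :=
  [set d + t | d in D].

Definition mink_sum (U V : set 'cV[R]_n) : set 'cV[R]_n :=
  [set u + v | u in U & v in V].

(* IFS given as the set of its (distinct) maps *)
Definition is_attractor (F : set ('cV[R]_n -> 'cV[R]_n)) (K : set 'cV[R]_n) : Prop :=
  compact K /\ K !=set0 /\ K = \bigcup_(f in F) (f @` K).

Definition bounded_enorm (V : set 'cV[R]_n) : Prop :=
  exists M : R, forall x, V x -> enorm x <= M.

Definition open_set_condition (F : set ('cV[R]_n -> 'cV[R]_n)) : Prop :=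
  exists V : set 'cV[R]_n, V !=set0 /\ bounded_enorm V /\ open V /\
    (\bigcup_(f in F) (f @` V) `<=` V) /\
    (forall f g, F f -> F g -> f <> g -> (f @` V) `&` (g @` V) = set0).

Definition strong_separation_condition (F : set ('cV[R]_n -> 'cV[R]_n)) : Prop :=
  forall K, is_attractor F K ->
    forall f g, F f -> F g -> f <> g -> (f @` K) `&` (g @` K) = set0.

Definition thm_ifs (A : 'M[int]_n) (p : nat) (U V : nat -> set 'cV[R]_n)
  : set ('cV[R]_n -> 'cV[R]_n) :=
  [set f | exists u v : nat -> 'cV[R]_n,
     (forall l, (1 <= l <= p)%N -> U l (u l) /\ V l (v l)) /\
     f = (fun x => (invmx (matR A)) ^+ p *m
            (x + \sum_(1 <= l < p.+1)
                   ((matR A) ^+ (p - l) *m u l + (invmx (matR A)) ^+ l *m v l)))].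

End Defs.

(* Suppose two distinct maps [f], [g] of the IFS send points [y], [z] of the
   attractor [K] to the same point [x].  Coding [y] and [z] by backward orbits
   in [K] writes [x] in two ways as [sum_(j >= 1) A^-j d_j] with digits [d_j]
   in [(D `&` (D + a_j)) - beta_j].  The difference of the two underlying
   integer digit sequences, shifted by [a], is another [(A, D - D)]-expansion
   of [alpha], so by uniqueness the two digit sequences coincide.  Their first
   two blocks of [p] digits force [f \o h = g \o h'] for two maps [h], [h'] of
   the IFS, and then [f (h w) = g (h' w)] for [w] in an open set [W] witnessing
   the open set condition contradicts the disjointness of [f @` W], [g @` W]. *)

From HB Require Import structures.
From mathcomp Require Import all_boot all_order all_algebra.
From mathcomp Require Import all_classical all_reals all_analysis.
Import Order.TTheory GRing.Theory Num.Theory.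
Import numFieldNormedType.Exports.
Local Open Scope classical_set_scope.
Local Open Scope ring_scope.
Set Implicit Arguments. Unset Strict Implicit. Unset Printing Implicit Defensive.

Section EuclideanNorm.
Variables (R : realType) (n : nat).
Implicit Types x : 'cV[R]_n.

Lemma normr_le_enorm x : `|x| <= enorm x.
Proof.
rewrite (_ : `|x| = mx_norm x) // mx_normrE; apply/bigmax_leP; split; first exact: sqrtr_ge0.
move=> [i j] _ /=; rewrite (ord1 j) /enorm -sqrtr_sqr ler_sqrt; last first.
  by apply: sumr_ge0 => k _; exact: sqr_ge0.
by rewrite (bigD1 i) //= lerDl; apply: sumr_ge0 => k _; exact: sqr_ge0.
Qed.

Lemma enorm_le_normr x : enorm x <= n%:R * `|x|.
Proof.
have nx_ge0 : 0 <= n%:R * `|x| by rewrite mulr_ge0.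
rewrite /enorm -(ger0_norm nx_ge0) -sqrtr_sqr ler_sqrt; last exact: sqr_ge0.
apply: (@le_trans _ _ (\sum_(i < n) `|x| ^+ 2)).
  apply: ler_sum => i _; rewrite -real_normK ?num_real //.
  apply: lerXn2r; rewrite ?nnegrE //.
  by rewrite (_ : `|x| = mx_norm x) // mx_normrE; apply/bigmax_geP; right; exists (i, 0).
rewrite sumr_const card_ord exprMn -[_ *+ n]mulr_natl; apply: ler_wpM2r; first exact: sqr_ge0.
by rewrite -natrX ler_nat; case: n => // m; rewrite expnS leq_pmulr // expn_gt0.
Qed.

Variables (M : 'M[R]_n) (c : R).
Hypothesis c_ge0 : 0 <= c.
Hypothesis M_sim : forall x y, enorm (M *m x - M *m y) = c * enorm (x - y).

Lemma enorm_expmx k x : enorm (M ^+ k *m x) = c ^+ k * enorm x.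
Proof.
elim: k x => [|k IH] x; first by rewrite expr0 mul1mx mul1r.
rewrite exprS -mulmxE -mulmxA.
by have := M_sim (M ^+ k *m x) 0; rewrite mulmx0 !subr0 => ->; rewrite IH exprS mulrA.
Qed.

Lemma normr_expmx_le k x : `|M ^+ k *m x| <= n%:R * c ^+ k * `|x|.
Proof.
apply: (le_trans (normr_le_enorm _)); rewrite enorm_expmx -mulrA mulrCA.
by apply: ler_wpM2l; [rewrite exprn_ge0 | exact: enorm_le_normr].
Qed.

End EuclideanNorm.

Section Limits.
Variables (R : realType) (V : normedModType R).

Lemma cvg_geometric_bound (r : nat -> V) (C c : R) : 0 <= c < 1 ->
  (forall N, `|r N| <= C * c ^+ N) -> r @ \oo --> 0.
Proof.
case/andP=> c_ge0 c_lt1 hr.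
have geo0 : (fun N => C * c ^+ N) @ \oo --> (0 : R).
  by rewrite -(mulr0 C); apply: cvgMl_tmp; apply: cvg_expr; rewrite ger0_norm.
apply/cvgr0Pnorm_le => e e_gt0.
move/cvgr0_norm_le: geo0 => /(_ e e_gt0); apply: filterS => N /=.
by apply: le_trans; apply: (le_trans (hr N)); exact: ler_norm.
Qed.

(* [limn] is a junk value for divergent sequences, so this holds even when
   neither [f] nor [g] converges. *)
Lemma limn_eq_sub0 (f g : nat -> V) : (f - g) @ \oo --> 0 -> limn f = limn g.
Proof.
move=> fg0; rewrite /lim /lim_in; congr get; apply/funext => l; apply/propext.
split=> hl; last exact: cvg_sub0 fg0 hl.
by apply: cvg_sub0 _ hl; rewrite -opprB -oppr0; exact: cvgN.
Qed.

Lemma bounded_normr_le (A : set V) : bounded_set A ->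
  exists B, 0 <= B /\ forall x, A x -> `|x| <= B.
Proof.
move=> [B [B_real hB]]; exists (`|B| + 1); split; first by rewrite addr_ge0.
move=> x Ax; apply: (hB (`|B| + 1)) => //.
by apply: (le_lt_trans (real_ler_norm B_real)); rewrite ltrDl.
Qed.

End Limits.

Lemma finite_family_normr_le (R : realType) (n p : nat) (W : nat -> set 'cV[R]_n) :
  (forall l, (1 <= l <= p)%N -> finite_set (W l)) ->
  exists B, 0 <= B /\ forall l x, (1 <= l <= p)%N -> W l x -> `|x| <= B.
Proof.
move=> W_fin; set L := [set l | (1 <= l <= p)%N].
have L_fin : finite_set L.
  by apply: sub_finite_set (finite_II p.+1) => l /andP[_ lp]; rewrite /= ltnS.
have /finite_compact/compact_bounded := bigcup_finite L_fin W_fin.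
move=> /bounded_normr_le[B [B_ge0 hB]]; exists B; split=> // l x hl Wx.
by apply: hB; exists l.
Qed.

Lemma mulmx_exprD (R : pzRingType) (n : nat) (M : 'M[R]_n) a b :
  M ^+ a *m M ^+ b = M ^+ (a + b).
Proof. by rewrite exprD. Qed.

Section IfsMap.
Variables (R : realType) (n : nat) (M : 'M[R]_n) (p : nat).
Local Notation Mi := (invmx M).
Implicit Types u v : nat -> 'cV[R]_n.

Definition ifs_map u v (x : 'cV[R]_n) : 'cV[R]_n :=
  Mi ^+ p *m (x + \sum_(1 <= l < p.+1) (M ^+ (p - l) *m u l + Mi ^+ l *m v l)).

Definition admissible (U V : nat -> set 'cV[R]_n) u v :=
  forall l, (1 <= l <= p)%N -> U l (u l) /\ V l (v l).

Hypothesis M_unit : M \in unitmx.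

Lemma expmx_invmx_mul m : Mi ^+ m *m M ^+ m = 1%:M.
Proof.
elim: m => [|m IH]; first by rewrite !expr0 mul1mx.
rewrite exprSr exprS mulmxE -mulrA (mulrA Mi) -mulmxE (mulVmx M_unit).
by rewrite mulmxE idmxE mul1r -mulmxE.
Qed.

Lemma ifs_mapE u v x : ifs_map u v x = Mi ^+ p *m x +
  (\sum_(1 <= l < p.+1) Mi ^+ l *m u l + \sum_(1 <= l < p.+1) Mi ^+ (p + l) *m v l).
Proof.
rewrite /ifs_map mulmxDr mulmx_sumr -big_split /=; congr (_ + _).
rewrite big_nat_cond [RHS]big_nat_cond; apply: eq_bigr => l /andP[/andP[_ lp] _].
rewrite ltnS in lp; rewrite mulmxDr !mulmxA mulmx_exprD; congr (_ *m _ + _).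
by rewrite -{1}(subnKC lp) exprD -mulmxE -mulmxA expmx_invmx_mul mulmx1.
Qed.

Lemma ifs_map_comp a b c d x : ifs_map a b (ifs_map c d x) = Mi ^+ (p + p) *m x +
  (\sum_(1 <= l < p.+1) Mi ^+ l *m a l +
   \sum_(1 <= l < p.+1) Mi ^+ (p + l) *m (c l + b l) +
   \sum_(1 <= l < p.+1) Mi ^+ (p + p + l) *m d l).
Proof.
rewrite ifs_mapE (ifs_mapE c) mulmxDr mulmxA mulmx_exprD mulmxDr !mulmx_sumr.
under [\sum_(1 <= l < p.+1) Mi ^+ p *m (Mi ^+ l *m c l)]eq_bigr do
  rewrite mulmxA mulmx_exprD.
under [\sum_(1 <= l < p.+1) Mi ^+ p *m (Mi ^+ (p + l) *m d l)]eq_bigr do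
  rewrite mulmxA mulmx_exprD addnA.
under [\sum_(1 <= l < p.+1) Mi ^+ (p + l) *m (c l + b l)]eq_bigr do
  rewrite mulmxDr.
rewrite big_split /= -!addrA; congr (_ + _); rewrite [RHS]addrCA; congr (_ + _).
by rewrite [LHS]addrC [RHS]addrA.
Qed.

Lemma ifs_map_comp_eq a b c d a' b' c' x :
  (forall l, (1 <= l <= p)%N -> a l = a' l /\ c l + b l = c' l + b' l) ->
  ifs_map a b (ifs_map c d x) = ifs_map a' b' (ifs_map c' d x).
Proof.
move=> eq_ab; rewrite !ifs_map_comp; congr (_ + (_ + _ + _));
  by apply: eq_big_nat => l /eq_ab[ea eb]; rewrite ?ea ?eb.
Qed.

End IfsMap.

Lemma thm_ifsP (R : realType) (n : nat) (A : 'M[int]_n) p (U V : nat -> set 'cV[R]_n) f :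
  thm_ifs A p U V f <->
  exists u v, admissible p U V u v /\ f = ifs_map (matR R A) p u v.
Proof. by []. Qed.

Section Coding.
Variables (R : realType) (n : nat) (M : 'M[R]_n) (p : nat).
Hypothesis M_unit : M \in unitmx.
Hypothesis p_gt0 : (0 < p)%N.
Local Notation Mi := (invmx M).
Variables (uu vv : nat -> nat -> 'cV[R]_n) (ys : nat -> 'cV[R]_n).

Definition ifs_coding (U V : nat -> set 'cV[R]_n) :=
  (forall k, admissible p U V (uu k) (vv k)) /\
  (forall k, ys k = ifs_map M p (uu k) (vv k) (ys k.+1)).

(* Unfolding [ys 0 = f_0 (f_1 (...))] with [f_k = ifs_map M p (uu k) (vv k)],
   the digit at position [k * p + l] is [uu k l + vv (k - 1) l], the [v]-part
   of [f_(k-1)] landing one block further than its [u]-part. *)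
Definition carry k : nat -> 'cV[R]_n := if k is k'.+1 then vv k' else fun=> 0.

Definition digit j := uu (j.-1 %/ p) (j.-1 %% p).+1 + carry (j.-1 %/ p) (j.-1 %% p).+1.

Definition digit_sum N := \sum_(1 <= j < N) Mi ^+ j *m digit j.

Definition coding_tail k := \sum_(1 <= l < p.+1) Mi ^+ l *m carry k l + ys k.

Lemma digit_block k l : (1 <= l <= p)%N -> digit (k * p + l) = uu k l + carry k l.
Proof.
case/andP=> l_gt0 lp; have e : (k * p + l).-1 = (k * p + l.-1)%N.
  by rewrite -(prednK l_gt0) addnS.
have lp' : (l.-1 < p)%N by rewrite prednK.
by rewrite /digit e divnMDl // divn_small // addn0 modnMDl modn_small // prednK.
Qed.

Lemma digit_sum_block k : digit_sum (k.+1 * p).+1 = digit_sum (k * p).+1 +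
  Mi ^+ (k * p) *m \sum_(1 <= l < p.+1) Mi ^+ l *m (uu k l + carry k l).
Proof.
rewrite /digit_sum (@big_cat_nat _ _ _ (k * p).+1) //=; last first.
  by rewrite ltnS leq_mul2r leqnSn orbT.
congr (_ + _); rewrite mulmx_sumr -[(k * p).+1]add1n big_addn.
have -> : ((k.+1 * p).+1 - k * p = p.+1)%N by rewrite mulSn -addSn addnK.
rewrite big_nat_cond [RHS]big_nat_cond; apply: eq_bigr => l /andP[hl _].
by rewrite mulmxA mulmx_exprD addnC digit_block // addnC.
Qed.

Hypothesis ys_step : forall k, ys k = ifs_map M p (uu k) (vv k) (ys k.+1).

Lemma coding_tailS k : coding_tail k =
  \sum_(1 <= l < p.+1) Mi ^+ l *m (uu k l + carry k l) + Mi ^+ p *m coding_tail k.+1.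
Proof.
rewrite /coding_tail ys_step ifs_mapE // mulmxDr mulmx_sumr.
under [\sum_(1 <= l < p.+1) Mi ^+ p *m _]eq_bigr do rewrite mulmxA mulmx_exprD.
under [\sum_(1 <= l < p.+1) Mi ^+ l *m (_ + _)]eq_bigr do rewrite mulmxDr.
rewrite big_split /= -!addrA [RHS]addrCA; congr (_ + _).
by rewrite [LHS]addrC [RHS]addrA.
Qed.

Lemma digit_sum_tail k : ys 0 = digit_sum (k * p).+1 + Mi ^+ (k * p) *m coding_tail k.
Proof.
elim: k => [|k IH].
  rewrite mul0n expr0 mul1mx /digit_sum big_geq // add0r /coding_tail big1 ?add0r //.
  by move=> l _; rewrite mulmx0.
rewrite IH digit_sum_block coding_tailS mulmxDr -addrA mulmxA mulmx_exprD.
by rewrite mulSn addnC.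
Qed.

End Coding.

Section CodingConvergence.
Variables (R : realType) (n : nat) (M : 'M[R]_n) (p : nat) (c : R).
Hypothesis M_unit : M \in unitmx.
Hypothesis p_gt0 : (0 < p)%N.
Hypotheses (c_gt0 : 0 < c) (c_lt1 : c < 1).
Local Notation Mi := (invmx M).
Hypothesis Mi_sim : forall x y, enorm (Mi *m x - Mi *m y) = c * enorm (x - y).
Variables (uu vv : nat -> nat -> 'cV[R]_n) (ys : nat -> 'cV[R]_n).
Hypothesis ys_step : forall k, ys k = ifs_map M p (uu k) (vv k) (ys k.+1).
Variables (BD BT : R).
Hypothesis digit_le : forall j, (0 < j)%N -> `|digit p uu vv j| <= BD.
Hypothesis tail_le : forall k, `|coding_tail M p vv ys k| <= BT.

Let c_ge0 : 0 <= c. Proof. exact: ltW. Qed.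
Let BD_ge0 : 0 <= BD. Proof. exact: le_trans (normr_ge0 _) (digit_le (ltn0Sn 0)). Qed.

Lemma digit_sum_err N : `|ys 0 - digit_sum M p uu vv N.+1| <=
  n%:R * (BT + p%:R * BD) * c ^+ (N %/ p * p).
Proof.
set k := (N %/ p)%N; have eN : N = (k * p + N %% p)%N by rewrite /k -divn_eq.
have kp_le : ((k * p).+1 <= N.+1)%N by rewrite ltnS {1}eN leq_addr.
have nc_ge0 : 0 <= n%:R * c ^+ (k * p) by rewrite mulr_ge0 // exprn_ge0.
rewrite (digit_sum_tail M_unit p_gt0 ys_step k) /digit_sum (big_cat_nat _ kp_le) //=.
rewrite [_ + Mi ^+ _ *m _]addrC addrKA mulrAC mulrDr.
apply: (le_trans (ler_normB _ _)); apply: lerD.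
  by apply: (le_trans (normr_expmx_le c_ge0 Mi_sim _ _)); exact: ler_wpM2l.
apply: (le_trans (ler_norm_sum _ _ _)).
apply: (@le_trans _ _ (\sum_((k * p).+1 <= j < N.+1) n%:R * c ^+ (k * p) * BD)).
  rewrite big_nat_cond [leRHS]big_nat_cond.
  apply: ler_sum => j /andP[/andP[kp_lt_j _] _].
  apply: (le_trans (normr_expmx_le c_ge0 Mi_sim _ _)); rewrite -mulrA -[leRHS]mulrA.
  apply: ler_wpM2l => //; apply: ler_pM; rewrite ?exprn_ge0 //.
    by apply: ler_wiXn2l => //; [rewrite ltW | exact: ltnW].
  by apply: digit_le; apply: leq_trans kp_lt_j.
rewrite sumr_const_nat -mulrnAr; apply: ler_wpM2l => //.
rewrite -mulr_natl; apply: ler_wpM2r => //.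
by rewrite ler_nat subSS {1}eN addKn; exact/ltnW/ltn_pmod.
Qed.

Lemma digit_sum_cvg : digit_sum M p uu vv @ \oo --> ys 0.
Proof.
rewrite -cvg_shiftS; apply: cvg_zero.
apply: (@cvg_geometric_bound _ _ _ (n%:R * (BT + p%:R * BD) / c ^+ p) c).
  by rewrite c_ge0.
move=> N /=; rewrite -normrN opprB; apply: (le_trans (digit_sum_err N)).
have X_ge0 : 0 <= BT + p%:R * BD.
  by rewrite addr_ge0 ?mulr_ge0 // (le_trans (normr_ge0 _) (tail_le 0)).
rewrite -!mulrA; do 2!apply: ler_wpM2l => //.
rewrite mulrC ler_pdivlMr ?exprn_gt0 // -exprD.
apply: ler_wiXn2l => //; first exact: ltW.
by rewrite {1}(divn_eq N p) leq_add2l ltnW // ltn_pmod.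
Qed.

End CodingConvergence.

Section BoundedCoding.
Variables (R : realType) (n : nat) (M : 'M[R]_n) (p : nat) (c : R).
Hypothesis M_unit : M \in unitmx.
Hypothesis p_gt0 : (0 < p)%N.
Hypotheses (c_gt0 : 0 < c) (c_lt1 : c < 1).
Hypothesis Mi_sim : forall x y, enorm (invmx M *m x - invmx M *m y) = c * enorm (x - y).
Variables (U V : nat -> set 'cV[R]_n) (BU BV : R).
Hypothesis BV_ge0 : 0 <= BV.
Hypothesis U_le : forall l x, (1 <= l <= p)%N -> U l x -> `|x| <= BU.
Hypothesis V_le : forall l x, (1 <= l <= p)%N -> V l x -> `|x| <= BV.

Lemma ifs_coding_cvg uu vv ys (BK : R) : ifs_coding M p uu vv ys U V ->
  (forall k, `|ys k| <= BK) -> digit_sum M p uu vv @ \oo --> ys 0.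
Proof.
move=> [adm ys_step] ys_le.
have carry_le k l : (1 <= l <= p)%N -> `|carry vv k l| <= BV.
  by case: k => [|k] hl /=; [rewrite normr0 | apply: V_le hl (adm k l hl).2].
have digit_l j : (1 <= (j.-1 %% p).+1 <= p)%N by rewrite /= ltn_pmod.
apply: (digit_sum_cvg M_unit p_gt0 c_gt0 c_lt1 Mi_sim ys_step (BD := BU + BV)
  (BT := p%:R * (n%:R * BV) + BK)).
  move=> j _; apply: (le_trans (ler_normD _ _)); apply: lerD; last exact: carry_le.
  exact: U_le (digit_l j) (adm _ _ (digit_l j)).1.
move=> k; apply: (le_trans (ler_normD _ _)); apply: lerD; last exact: ys_le.
apply: (le_trans (ler_norm_sum _ _ _)).
apply: (@le_trans _ _ (\sum_(1 <= l < p.+1) n%:R * BV)); last first.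
  by rewrite sumr_const_nat subn1 [leRHS]mulr_natl.
rewrite big_nat_cond [leRHS]big_nat_cond.
apply: ler_sum => l /andP[hl _].
apply: (le_trans (normr_expmx_le (ltW c_gt0) Mi_sim _ _)); rewrite -mulrA.
apply: ler_wpM2l => //; rewrite -[leRHS]mul1r; apply: ler_pM => //.
- by rewrite exprn_ge0 // ltW.
- by rewrite exprn_ile1 // ltW.
- exact: carry_le.
Qed.

End BoundedCoding.

Section CodingExistence.
Variables (R : realType) (n : nat) (A : 'M[int]_n) (p : nat).
Variables (U V : nat -> set 'cV[R]_n) (K : set 'cV[R]_n).
Hypothesis K_inv : K = \bigcup_(f in thm_ifs A p U V) (f @` K).
Local Notation M := (matR R A).

Lemma ifs_coding_from u v y : K y -> admissible p U V u v ->
  exists uu vv ys, [/\ uu 0%N = u, vv 0%N = v, ys 0%N = ifs_map M p u v y,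
    forall k, K (ys k) & ifs_coding M p uu vv ys U V].
Proof.
move=> Ky adm_uv.
have step z : exists t : (nat -> 'cV[R]_n) * (nat -> 'cV[R]_n) * 'cV[R]_n,
    K z -> [/\ admissible p U V t.1.1 t.1.2, K t.2 & z = ifs_map M p t.1.1 t.1.2 t.2].
  have [Kz|nKz] := pselect (K z); last by exists (fun=> 0, fun=> 0, 0) => /nKz.
  move: Kz; rewrite {1}K_inv => -[f /thm_ifsP[u' [v' [adm ->]]] [y' Ky' <-]].
  by exists (u', v', y').
have [h hh] := choice step.
pose orb k := iter k (fun z => (h z).2) y.
have K_orb k : K (orb k) by elim: k => [|k IH] //=; have [] := hh _ IH.
exists (fun k => if k is k'.+1 then (h (orb k')).1.1 else u).
exists (fun k => if k is k'.+1 then (h (orb k')).1.2 else v).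
exists (fun k => if k is k'.+1 then orb k' else ifs_map M p u v y).
split=> //; last split.
- case=> [|k]; last exact: K_orb.
  rewrite K_inv; exists (ifs_map M p u v); last by exists y.
  by apply/thm_ifsP; exists u, v.
- by case=> [|k] //=; have [] := hh _ (K_orb k).
- by case=> [|k] //=; have [] := hh _ (K_orb k).
Qed.

End CodingExistence.

Section DigitUniqueness.
Variables (R : realType) (n : nat) (A : 'M[int]_n) (p : nat).
Variables (D : set 'cV[int]_n) (alpha : 'cV[R]_n) (a beta : nat -> 'cV[int]_n).
Variables (U V : nat -> set 'cV[R]_n).
Hypothesis p_gt0 : (0 < p)%N.
Hypothesis a_repr : is_repr A (set_diff D) a alpha.
Hypothesis a_uniq : forall e, is_repr A (set_diff D) e alpha ->
  forall j, (0 < j)%N -> e j = a j.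
Hypothesis U_digits : forall j, (1 <= j <= p)%N ->
  [set toR R (d - beta j) | d in D `&` set_translate D (a j)] = U j.
Hypothesis UV_digits : forall j l, (p < j)%N -> (1 <= l <= p)%N -> j = l %[mod p] ->
  [set toR R (d - beta j) | d in D `&` set_translate D (a j)] = mink_sum (U l) (V l).

Lemma digit_mem uu vv j : (forall k, admissible p U V (uu k) (vv k)) -> (0 < j)%N ->
  [set toR R (d - beta j) | d in D `&` set_translate D (a j)] (digit p uu vv j).
Proof.
move=> adm j_gt0.
have [k [l hl ->]] : exists k, exists2 l, (1 <= l <= p)%N & j = (k * p + l)%N.
  exists (j.-1 %/ p)%N, (j.-1 %% p).+1; first by rewrite /= ltn_pmod.
  by rewrite addnS -divn_eq prednK.
rewrite digit_block //; case: k => [|k].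
  by rewrite mul0n add0n U_digits //= addr0; exact: (adm 0%N l hl).1.
rewrite (UV_digits (l := l)) //; last by rewrite modnMDl.
  by exists (uu k.+1 l); [exact: (adm k.+1 l hl).1 | exists (vv k l) => //; exact: (adm k l hl).2].
by case/andP: hl => l_gt0 _; rewrite mulSn -addnA -{1}[p]addn0 ltn_add2l ltn_addl.
Qed.

Lemma digit_unique uu vv uu' vv' (x : 'cV[R]_n) :
  (forall k, admissible p U V (uu k) (vv k)) ->
  (forall k, admissible p U V (uu' k) (vv' k)) ->
  digit_sum (matR R A) p uu vv @ \oo --> x ->
  digit_sum (matR R A) p uu' vv' @ \oo --> x ->
  forall j, (0 < j)%N -> digit p uu vv j = digit p uu' vv' j.
Proof.
move=> adm adm' cvg_x cvg_x'.
have int_digits uu1 vv1 : (forall k, admissible p U V (uu1 k) (vv1 k)) ->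
    {dd : nat -> 'cV[int]_n & forall j, (0 < j)%N ->
      (D `&` set_translate D (a j)) (dd j) /\ digit p uu1 vv1 j = toR R (dd j - beta j)}.
  move=> adm1; apply: (@choice _ _ (fun j d => (0 < j)%N ->
      (D `&` set_translate D (a j)) d /\ digit p uu1 vv1 j = toR R (d - beta j))) => j.
  have [->|j_gt0] := posnP j; first by exists 0.
  by have [d Dd <-] := digit_mem adm1 j_gt0; exists d.
have [dd hdd] := int_digits _ _ adm; have [dd' hdd'] := int_digits _ _ adm'.
pose e j := dd j - dd' j + a j.
have e_repr : is_repr A (set_diff D) e alpha.
  split=> [j j_gt0|].
    have [[Dd _] _] := hdd j j_gt0; have [[_ [d0 Dd0 ed0]] _] := hdd' j j_gt0.
    by exists (dd j) => //; exists d0 => //; rewrite /e -ed0 opprD addrA subrK.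
  have [_ <-] := a_repr; apply: limn_eq_sub0.
  have -> : (fun N => \sum_(1 <= j < N) invmx (matR R A) ^+ j *m toR R (e j)) -
            (fun N => \sum_(1 <= j < N) invmx (matR R A) ^+ j *m toR R (a j)) =
            digit_sum (matR R A) p uu vv - digit_sum (matR R A) p uu' vv'.
    apply/funext => N; rewrite !fctE /digit_sum -!sumrB.
    rewrite big_nat_cond [RHS]big_nat_cond; apply: eq_bigr => j /andP[/andP[j_gt0 _] _].
    rewrite -!mulmxBr (hdd j j_gt0).2 (hdd' j j_gt0).2 /toR map_mxD addrK.
    by rewrite -map_mxB opprB addrA subrK.
  by rewrite -(subrr x); apply: cvgB.
move=> j j_gt0; have := a_uniq e_repr j_gt0.
rewrite /e -[in RHS](add0r (a j)) => /addIr/eqP; rewrite subr_eq0 => /eqP dd_eq.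
by rewrite (hdd j j_gt0).2 (hdd' j j_gt0).2 dd_eq.
Qed.

End DigitUniqueness.

Lemma osc_comp_eq (R : realType) (n : nat) (F : set ('cV[R]_n -> 'cV[R]_n)) f g h h' :
  open_set_condition F -> F f -> F g -> F h -> F h' ->
  (forall w, f (h w) = g (h' w)) -> f = g.
Proof.
move=> [W [[w Ww] [_ [_ [W_sub W_disj]]]]] Ff Fg Fh Fh' fh_gh.
apply: contrapT => fg; have W_img k : F k -> W (k w).
  by move=> Fk; apply: W_sub; exists k => //; exists w.
suff : (f @` W `&` g @` W) (f (h w)) by rewrite W_disj.
by split; [exists (h w) | exists (h' w)]; rewrite ?fh_gh //; exact: W_img.
Qed.

Lemma matR_unitmx (R : realType) (n : nat) (A : 'M[int]_n) :
  \det A != 0 -> matR R A \in unitmx.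
Proof.
by move=> detA; rewrite unitmxE unitfE (_ : matR R A = map_mx intr A) // det_map_mx intr_eq0.
Qed.

Section MeetingImages.
Variables (R : realType) (n : nat) (A : 'M[int]_n) (p : nat).
Variables (D : set 'cV[int]_n) (alpha : 'cV[R]_n) (a beta : nat -> 'cV[int]_n).
Variables (U V : nat -> set 'cV[R]_n) (K : set 'cV[R]_n).
Hypothesis detA : \det A != 0.
Hypothesis Ai_sim : is_similarity (invmx (matR R A)).
Hypothesis p_gt0 : (0 < p)%N.
Hypothesis a_repr : is_repr A (set_diff D) a alpha.
Hypothesis a_uniq : forall e, is_repr A (set_diff D) e alpha ->
  forall j, (0 < j)%N -> e j = a j.
Hypothesis UV_fin : forall l, (1 <= l <= p)%N -> finite_set (U l) /\ finite_set (V l).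
Hypothesis U_digits : forall j, (1 <= j <= p)%N ->
  [set toR R (d - beta j) | d in D `&` set_translate D (a j)] = U j.
Hypothesis UV_digits : forall j l, (p < j)%N -> (1 <= l <= p)%N -> j = l %[mod p] ->
  [set toR R (d - beta j) | d in D `&` set_translate D (a j)] = mink_sum (U l) (V l).
Hypothesis K_cpt : compact K.
Hypothesis K_inv : K = \bigcup_(f in thm_ifs A p U V) (f @` K).
Local Notation M := (matR R A).

Lemma ifs_images_meet_comp u v u' v' y z : K y -> K z ->
  admissible p U V u v -> admissible p U V u' v' ->
  ifs_map M p u v y = ifs_map M p u' v' z ->
  exists h h', [/\ thm_ifs A p U V h, thm_ifs A p U V h' &
    forall w, ifs_map M p u v (h w) = ifs_map M p u' v' (h' w)].
Proof.
move=> Ky Kz adm_uv adm_uv' fy_gz.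
have [c [/andP[c_gt0 c_lt1] Mi_sim]] := Ai_sim; have M_unit := matR_unitmx R detA.
have [BU [_ U_le]] := finite_family_normr_le (p := p) (fun l hl => (UV_fin hl).1).
have [BV [BV_ge0 V_le]] := finite_family_normr_le (p := p) (fun l hl => (UV_fin hl).2).
have [BK [_ K_le]] := bounded_normr_le (compact_bounded K_cpt).
have cvg := ifs_coding_cvg M_unit p_gt0 c_gt0 c_lt1 Mi_sim BV_ge0 U_le V_le.
have [uu [vv [ys [uu0 vv0 ys0 K_ys [adm ys_step]]]]] := ifs_coding_from K_inv Ky adm_uv.
have [uu' [vv' [ys' [uu0' vv0' ys0' K_ys' [adm' ys_step']]]]] :=
  ifs_coding_from K_inv Kz adm_uv'.
have cvg_x := cvg _ _ _ _ (conj adm ys_step) (fun k => K_le _ (K_ys k)).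
have cvg_x' := cvg _ _ _ _ (conj adm' ys_step') (fun k => K_le _ (K_ys' k)).
rewrite ys0' -fy_gz -ys0 in cvg_x'.
have digits_eq k l : (1 <= l <= p)%N -> uu k l + carry vv k l = uu' k l + carry vv' k l.
  move=> hl; rewrite -!(digit_block p_gt0) //.
  apply: (digit_unique p_gt0 a_repr a_uniq U_digits UV_digits adm adm' cvg_x cvg_x').
  by case/andP: hl => l_gt0 _; rewrite ltn_addl.
(* The first two digit blocks give [u = u'] and [uu 1 + v = uu' 1 + v']. *)
exists (ifs_map M p (uu 1%N) (vv 1%N)), (ifs_map M p (uu' 1%N) (vv 1%N)); split.
- by exists (uu 1%N), (vv 1%N); split; first exact: adm.
- exists (uu' 1%N), (vv 1%N); split=> // l hl.
  by split; [apply: (adm' 1%N l hl).1 | apply: (adm 1%N l hl).2].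
move=> w; rewrite -uu0 -vv0 -uu0' -vv0'; apply: (ifs_map_comp_eq M_unit) => l hl.
by have := digits_eq 0%N l hl; rewrite /= !addr0; split=> //; exact: digits_eq.
Qed.

End MeetingImages.

Theorem mainTheorem8 (R : realType) (n : nat) (A : 'M[int]_n)
    (D : set 'cV[int]_n) (alpha : 'cV[R]_n) (a : nat -> 'cV[int]_n)
    (p : nat) (U V : nat -> set 'cV[R]_n) (beta : nat -> 'cV[int]_n) :
  \det A != 0 ->
  is_similarity (invmx (matR R A)) ->
  (exists Dc : set 'cV[int]_n, complete_residue_system A Dc /\ D `<=` Dc) ->
  @TAE R n A (set_diff D) alpha ->
  @is_repr R n A (set_diff D) a alpha ->
  (forall e, is_repr A (set_diff D) e alpha -> forall j, (0 < j)%N -> e j = a j) ->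
  (0 < p)%N ->
  (forall l, (1 <= l <= p)%N -> finite_set (U l) /\ finite_set (V l)) ->
  (forall j, (0 < j)%N -> D (beta j)) ->
  (forall j, (1 <= j <= p)%N ->
     [set toR R (d - beta j) | d in D `&` set_translate D (a j)] = U j) ->
  (forall j l, (p < j)%N -> (1 <= l <= p)%N -> j = l %[mod p] ->
     [set toR R (d - beta j) | d in D `&` set_translate D (a j)]
       = mink_sum (U l) (V l)) ->
  open_set_condition (thm_ifs A p U V) ->
  strong_separation_condition (thm_ifs A p U V).
Proof.
move=> detA Ai_sim _ _ a_repr a_uniq p_gt0 UV_fin _ U_digits UV_digits osc.
move=> K [K_cpt [_ K_inv]] f g Ff Fg fg.
apply/seteqP; split=> // x [[y Ky <-] [z Kz gz_fy]]; apply: fg.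
have /thm_ifsP[u [v [adm_uv ef]]] := Ff; have /thm_ifsP[u' [v' [adm_uv' eg]]] := Fg.
have [|h [h' [Fh Fh' fh_gh]]] := ifs_images_meet_comp detA Ai_sim p_gt0 a_repr a_uniq
  UV_fin U_digits UV_digits K_cpt K_inv Ky Kz adm_uv adm_uv'.
  by rewrite -ef -eg.
by apply: (osc_comp_eq osc Ff Fg Fh Fh') => w; rewrite ef eg.
Qed.
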